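(* Let $\mathbb{R}$ be the real line with the distance $d(x,y)=|x-y|$, and let $\mathcal C\subseteq\mathrm{age}(\mathbb{R})$ be an ideal. Then $\mathcal C$ has the $2$-amalgamation property if and only if there is a homogeneous metric space $\mathbb D$ with $\mathrm{age}(\mathbb D)=\mathcal C$. Moreover, if $\mathcal C$ contains at least one $3$-element metric space, then such a $\mathbb D$ can be taken to be $(G,d_{\restriction G})$ where $G$ is an additive subgroup of $\mathbb{R}$ and $d_{\restriction G}$ is the restriction of $d$.
   Context: Finite metric spaces are considered up to isometry and ordered by isometric embeddability; the age of a metric space is the set of isometry types of its finite subspaces; an ideal is a non-empty, downward closed, up-directed set of such isometry types. $\mathcal C$ has the $2$-amalgamation property if for all isometric embeddings $f_1:\mathbb A\to\mathbb A_1$, $f_2:\mathbb A\to\mathbb A_2$ between finite metric spaces with isometry types in $\mathcal C$ and $|\mathbb A|\le 2$, there exist a finite metric space $\mathbb B$ with type in $\mathcal C$ and isometric embeddings $g_1:\mathbb A_1\to\mathbb B$, $g_2:\mathbb A_2\to\mathbb B$ with $g_1\circ f_1=g_2\circ f_2$. A metric space $\mathbb D$ is homogeneous if every isometry between finite subspaces of $\mathbb D$ extends to an isometry of $\mathbb D$ onto itself. *)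

From Stdlib Require Import Reals Lra.
From Stdlib Require Import ProofIrrelevance.
From mathcomp Require Import all_boot.


Local Open Scope R_scope.

Record MetricSpace := {
  ms_carrier :> Type;
  ms_d : ms_carrier -> ms_carrier -> R;
  ms_d_eq0 : forall x y, ms_d x y = 0 <-> x = y;
  ms_d_sym : forall x y, ms_d x y = ms_d y x;
  ms_d_tri : forall x y z, ms_d x z <= ms_d x y + ms_d y z
}.

Record FMS := {
  fms_card : nat;
  fms_d : 'I_fms_card -> 'I_fms_card -> R;
  fms_d_eq0 : forall i j, fms_d i j = 0 <-> i = j;
  fms_d_sym : forall i j, fms_d i j = fms_d j i;
  fms_d_tri : forall i j k, fms_d i k <= fms_d i j + fms_d j k
}.

Definition fms_embedding (A B : FMS) (f : 'I_(fms_card A) -> 'I_(fms_card B)) : Prop :=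
  forall i j, fms_d B (f i) (f j) = fms_d A i j.

Definition fms_embeds (A B : FMS) : Prop :=
  exists f, fms_embedding A B f.

Definition fms_class := FMS -> Prop.

Definition is_ideal (C : fms_class) : Prop :=
  (exists A, C A) /\
  (forall A B, C B -> fms_embeds A B -> C A) /\
  (forall A B, C A -> C B -> exists E, C E /\ fms_embeds A E /\ fms_embeds B E).

Definition age (D : MetricSpace) : fms_class :=
  fun A => exists e : 'I_(fms_card A) -> D,
    forall i j, ms_d D (e i) (e j) = fms_d A i j.

Definition same_class (C1 C2 : fms_class) : Prop := forall A, C1 A <-> C2 A.

Definition subclass (C1 C2 : fms_class) : Prop := forall A, C1 A -> C2 A.

Definition two_amalgamation (C : fms_class) : Prop :=
  forall (A A1 A2 : FMS) (f1 : 'I_(fms_card A) -> 'I_(fms_card A1))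
         (f2 : 'I_(fms_card A) -> 'I_(fms_card A2)),
    C A -> C A1 -> C A2 -> (fms_card A <= 2)%N ->
    fms_embedding A A1 f1 -> fms_embedding A A2 f2 ->
    exists (B : FMS) (g1 : 'I_(fms_card A1) -> 'I_(fms_card B))
           (g2 : 'I_(fms_card A2) -> 'I_(fms_card B)),
      C B /\ fms_embedding A1 B g1 /\ fms_embedding A2 B g2 /\
      (forall i, g1 (f1 i) = g2 (f2 i)).

(** A finite partial isometry is given by a
    finite list s of points (its domain) and a map f that is
    distance-preserving on s; its image is f(s). *)
Definition homogeneous (D : MetricSpace) : Prop :=
  forall (s : list D) (f : D -> D),
    (forall x y, List.In x s -> List.In y s -> ms_d D (f x) (f y) = ms_d D x y) ->
    exists g : D -> D,
      (forall y : D, exists x, g x = y) /\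
      (forall x y, ms_d D (g x) (g y) = ms_d D x y) /\
      (forall x, List.In x s -> g x = f x).

Lemma Rline_eq0 (x y : R) : Rabs (x - y) = 0 <-> x = y.
Proof.
split => [H|->]; last by rewrite Rminus_diag Rabs_R0.
move: H; case: (Rcase_abs (x - y)) => h; [rewrite Rabs_left //|rewrite Rabs_right //]; lra.
Qed.

Lemma Rline_sym (x y : R) : Rabs (x - y) = Rabs (y - x).
Proof. exact: Rabs_minus_sym. Qed.

Lemma Rline_tri (x y z : R) : Rabs (x - z) <= Rabs (x - y) + Rabs (y - z).
Proof.
replace (x - z) with ((x - y) + (y - z)) by ring; exact: Rabs_triang.
Qed.

Definition Rline : MetricSpace :=
  {| ms_carrier := R; ms_d := fun x y => Rabs (x - y);
     ms_d_eq0 := Rline_eq0; ms_d_sym := Rline_sym; ms_d_tri := Rline_tri |}.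

Section Sub.
Variables (X : MetricSpace) (P : X -> Prop).
Definition sub_d (x y : {x : X | P x}) : R := ms_d X (proj1_sig x) (proj1_sig y).
Lemma sub_d_eq0 x y : sub_d x y = 0 <-> x = y.
Proof.
rewrite /sub_d ms_d_eq0; split => [|->] //.
case: x y => [x px] [y py] /= exy; subst y.
by rewrite (proof_irrelevance _ px py).
Qed.
End Sub.
Lemma sub_d_sym (X : MetricSpace) (P : X -> Prop) x y :
  sub_d X P x y = sub_d X P y x.
Proof. exact: ms_d_sym. Qed.
Lemma sub_d_tri (X : MetricSpace) (P : X -> Prop) x y z :
  sub_d X P x z <= sub_d X P x y + sub_d X P y z.
Proof. exact: ms_d_tri. Qed.

Definition subspace (X : MetricSpace) (P : X -> Prop) : MetricSpace :=
  {| ms_carrier := {x : X | P x}; ms_d := sub_d X P;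
     ms_d_eq0 := sub_d_eq0 X P; ms_d_sym := sub_d_sym X P;
     ms_d_tri := sub_d_tri X P |}.

Definition add_subgroup (G : R -> Prop) : Prop :=
  G 0 /\ (forall x y, G x -> G y -> G (x + y)) /\ (forall x, G x -> G (- x)).

From Stdlib Require Import Reals Lra ClassicalEpsilon ProofIrrelevance.
From mathcomp Require Import all_boot zify.

(* Homogeneity gives amalgamation: realize A1 and A2 in D and move the copy of
   A inside the copy of A2 onto the copy of A inside the copy of A1 by an isometry
   of D; the finite subspace spanned by both copies is the amalgam.

   Conversely, an isometry between subsets of the line is x |-> s x + c with
   s = 1 or s = -1, and it is unique as soon as its domain has two points.  So
   2-amalgamation glues realizations in R of two members of C along two common
   points.  Gluing a realization to its mirror image through the midpoint of two
   of its points, twice, shows that a realizable set with at least three points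
   stays realizable after adding z + q - p for any three of its points.  When C
   has a 3-element member, it follows that the set G of signed distances of C is
   an additive subgroup of R whose finite subsets are realized in C, and G is
   homogeneous since it is preserved by every map x |-> s x + c extending a
   partial isometry of G.  Otherwise every member of C has at most two points,
   and a largest member, seen as a subset of R, is homogeneous with age C. *)

Set Implicit Arguments.
Unset Strict Implicit.

Local Open Scope R_scope.

(** * Isometries of the real line *)

Lemma Rabs_eq_Rabs (x y : R) : Rabs x = Rabs y -> x = y \/ x = - y.
Proof. by move/Rsqr_eq_asb_1/Rsqr_eq. Qed.

Lemma Rabs_affine_pm1 (s c x y : R) : s = 1 \/ s = -1 ->
  Rabs ((s * x + c) - (s * y + c)) = Rabs (x - y).
Proof. by case=> ->; [|rewrite -Rabs_Ropp]; congr Rabs; ring. Qed.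

Lemma Rline_isometry_affine (T : Type) (u v : T -> R) (i0 : T) :
  (forall i j, Rabs (v i - v j) = Rabs (u i - u j)) ->
  exists s c, (s = 1 \/ s = -1) /\ forall i, v i = s * u i + c.
Proof.
move=> Hd; have [[i1 u10]|u_const] := classic (exists i1, u i1 <> u i0).
- have [E|E] := Rabs_eq_Rabs (Hd i1 i0);
    [exists 1, (v i0 - u i0) | exists (-1), (v i0 + u i0)]; split; auto => i;
  have [E0|E0] := Rabs_eq_Rabs (Hd i i0); have [E1|E1] := Rabs_eq_Rabs (Hd i i1); lra.
- exists 1, (v i0 - u i0); split; first by left.
  move=> i; have ui : u i = u i0 by apply: NNPP => ?; apply: u_const; exists i.
  have /Rline_eq0 : Rabs (v i - v i0) = 0 by rewrite Hd ui Rminus_diag Rabs_R0.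
  lra.
Qed.

Lemma affine_eq_at_two_points (s1 c1 s2 c2 y0 y1 : R) : y0 <> y1 ->
  s1 * y0 + c1 = s2 * y0 + c2 -> s1 * y1 + c1 = s2 * y1 + c2 -> s1 = s2 /\ c1 = c2.
Proof.
move=> y01 E0 E1; have /Rmult_integral[|] : (s1 - s2) * (y0 - y1) = 0 by lra.
- by move/Rminus_diag_uniq=> s12; subst s2; split; lra.
- lra.
Qed.

(** * Finite metric spaces *)

Lemma exists_factor (T X : Type) (k m : T -> X) :
  (forall i j, k i = k j -> m i = m j) -> exists F : X -> X, forall i, F (k i) = m i.
Proof.
move=> km; exists (fun x => epsilon (inhabits x) (fun y => exists2 i, k i = x & m i = y)) => i.
have [|j kj <-] := epsilon_spec (inhabits (k i)) (fun y => exists2 j, k j = k i & m j = y).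
  by exists (m i), i.
exact: km.
Qed.

Lemma injective_enumeration (T : finType) (X : Type) (v : T -> X) :
  exists n (w : 'I_n -> X), injective w /\ forall k, exists l, w l = v k.
Proof.
(* [r k] depends only on [v k]: it picks one index for each value of [v]. *)
pose r k := epsilon (inhabits k) (fun l => v l = v k).
have vr k : v (r k) = v k.
  by apply: (epsilon_spec (inhabits k) (fun l => v l = v k)); exists k.
have rE k k' : v k = v k' -> r k = r k'.
  by rewrite /r => ->; congr epsilon; apply: proof_irrelevance.
pose S := [set r k | k : T].
exists #|S|, (fun l => v (enum_val l)); split.
- move=> l l' E; apply: enum_val_inj; move: E.
  case/imsetP: (enum_valP l) => k _ ->; case/imsetP: (enum_valP l') => k' _ ->.
  by rewrite !vr => /rE.
- move=> k; have Sk : r k \in S by apply: imset_f.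
  by exists (enum_rank_in Sk (r k)); rewrite enum_rankK_in.
Qed.

Lemma In_enum (T : finType) (x : T) : List.In x (enum T).
Proof.
have : x \in enum T by rewrite mem_enum.
by elim: (enum T) => //= y s IH; rewrite inE => /orP[/eqP ->|/IH]; auto.
Qed.

Lemma isometry_inj (D : MetricSpace) (A : FMS) (w : 'I_(fms_card A) -> D) :
  (forall i j, ms_d D (w i) (w j) = fms_d A i j) -> injective w.
Proof. by move=> Hw i j wij; apply/(fms_d_eq0 A); rewrite -Hw wij; apply/ms_d_eq0. Qed.

Definition fms_space (A : FMS) : MetricSpace :=
  {| ms_carrier := 'I_(fms_card A); ms_d := fms_d A; ms_d_eq0 := fms_d_eq0 A;
     ms_d_sym := fms_d_sym A; ms_d_tri := fms_d_tri A |}.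

Lemma embedding_inj (A B : FMS) (f : 'I_(fms_card A) -> 'I_(fms_card B)) :
  fms_embedding A B f -> injective f.
Proof. exact: (@isometry_inj (fms_space B)). Qed.

Lemma fms_embeds_trans (A B E : FMS) : fms_embeds A B -> fms_embeds B E -> fms_embeds A E.
Proof. by move=> [f Hf] [g Hg]; exists (g \o f) => i j /=; rewrite Hg Hf. Qed.

Section InducedFMS.
Variables (D : MetricSpace) (n : nat) (w : 'I_n -> D).
Hypothesis w_inj : injective w.

Lemma induced_d_eq0 i j : ms_d D (w i) (w j) = 0 <-> i = j.
Proof. by rewrite ms_d_eq0; split=> [/w_inj|->]. Qed.

Definition induced_fms : FMS :=
  {| fms_card := n; fms_d i j := ms_d D (w i) (w j); fms_d_eq0 := induced_d_eq0;
     fms_d_sym i j := ms_d_sym D (w i) (w j);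
     fms_d_tri i j k := ms_d_tri D (w i) (w j) (w k) |}.

End InducedFMS.

Lemma ideal_restrict (C : fms_class) (A : FMS) n (u : 'I_n -> 'I_(fms_card A))
    (u_inj : injective u) :
  is_ideal C -> C A -> C (@induced_fms (fms_space A) n u u_inj).
Proof. by case=> _ [C_down _] CA; apply: (C_down _ A CA); exists u. Qed.

Lemma finite_subspace (D : MetricSpace) (T : finType) (v : T -> D) :
  exists (B : FMS) (w : 'I_(fms_card B) -> D),
    (forall i j, ms_d D (w i) (w j) = fms_d B i j) /\ forall k, exists l, w l = v k.
Proof.
have [n [w [w_inj w_onto]]] := injective_enumeration v.
by exists (induced_fms w_inj), w.
Qed.

Theorem homogeneous_two_amalgamation (D : MetricSpace) (C : fms_class) :
  homogeneous D -> same_class (age D) C -> two_amalgamation C.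
Proof.
move=> D_hom ageC A A1 A2 f1 f2 _ /ageC[e1 He1] /ageC[e2 He2] _ Hf1 Hf2.
pose k i := e2 (f2 i).
have [F Fk] : exists F : D -> D, forall i, F (k i) = e1 (f1 i).
  by apply: exists_factor => i j /(isometry_inj He2)/(embedding_inj Hf2) ->.
pose s := List.map k (enum 'I_(fms_card A)).
have F_iso x y : List.In x s -> List.In y s -> ms_d D (F x) (F y) = ms_d D x y.
  move=> /List.in_map_iff[i [<- _]] /List.in_map_iff[j [<- _]].
  by rewrite !Fk He1 Hf1 He2 Hf2.
have [g [_ [g_iso g_ext]]] := D_hom s F F_iso.
pose v (x : 'I_(fms_card A1) + 'I_(fms_card A2)) :=
  match x with inl i => e1 i | inr j => g (e2 j) end.
have [B [w [Hw w_onto]]] := finite_subspace v.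
have [g1 Hg1] := fin_all_exists (fun i => w_onto (inl i)).
have [g2 Hg2] := fin_all_exists (fun j => w_onto (inr j)).
exists B, g1, g2; split; [|split; [|split]].
- by apply/ageC; exists w.
- by move=> i j; rewrite -Hw !Hg1 He1.
- by move=> i j; rewrite -Hw !Hg2 /= g_iso He2.
- move=> i; apply: (isometry_inj Hw); rewrite Hg1 Hg2 /= g_ext ?Fk //.
  exact: List.in_map (In_enum i).
Qed.

(** * Homogeneous subspaces of the real line *)

Lemma subspace_val_inj (P : R -> Prop) (x y : subspace Rline P) :
  proj1_sig x = proj1_sig y :> R -> x = y.
Proof. by case: x y => [x Px] [y Py] /= E; apply: subset_eq_compat. Qed.

Lemma subspace_affine_isometry (P : R -> Prop) (s c : R) : s = 1 \/ s = -1 ->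
  (forall x, P x -> P (s * x + c)) -> (forall x, P x -> P (s * x - s * c)) ->
  exists g : subspace Rline P -> subspace Rline P,
    [/\ forall y, exists x, g x = y, forall x y, ms_d _ (g x) (g y) = ms_d _ x y
      & forall x, proj1_sig (g x) = s * proj1_sig x + c].
Proof.
move=> s1 P_fwd P_bwd.
exists (fun x => exist P _ (P_fwd _ (proj2_sig x))); split=> //.
- move=> y; exists (exist P _ (P_bwd _ (proj2_sig y))); apply: subspace_val_inj => /=.
  by case: s1 => ->; ring.
- by move=> x y; apply: Rabs_affine_pm1.
Qed.

Lemma add_subgroup_affine (P : R -> Prop) (s c x : R) : add_subgroup P ->
  s = 1 \/ s = -1 -> P c -> P x -> P (s * x + c).
Proof.
case=> _ [P_add P_opp] s1 Pc Px; apply: P_add Pc.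
by case: s1 => ->; [rewrite Rmult_1_l | rewrite -Ropp_mult_distr_l Rmult_1_l; apply: P_opp].
Qed.

Lemma subgroup_homogeneous (P : R -> Prop) :
  add_subgroup P -> homogeneous (subspace Rline P).
Proof.
move=> P_grp [|x0 s] f f_iso.
  by exists id; split=> // y; exists y.
have [P0 [_ P_opp]] := P_grp.
pose T := {x | List.In x (x0 :: s)}.
have [sg [c [sg1 f_affine]]] := @Rline_isometry_affine T
  (fun t => proj1_sig (proj1_sig t)) (fun t => proj1_sig (f (proj1_sig t)))
  (exist _ x0 (List.in_eq x0 s)) (fun a b => f_iso _ _ (proj2_sig a) (proj2_sig b)).
have Pc : P c.
  have -> : c = sg * (- proj1_sig x0) + proj1_sig (f x0).
    by rewrite (f_affine (exist _ x0 (List.in_eq x0 s))) /=; ring.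
  apply: add_subgroup_affine => //; first exact: proj2_sig.
  by apply: P_opp; exact: proj2_sig.
have P_sgc : P (- (sg * c)).
  by apply: P_opp; rewrite -(Rplus_0_r (sg * c)); apply: add_subgroup_affine.
have [g [g_onto g_iso g_val]] := @subspace_affine_isometry P sg c sg1
  (fun x Px => add_subgroup_affine P_grp sg1 Pc Px)
  (fun x Px => add_subgroup_affine P_grp sg1 P_sgc Px).
exists g; do 2!split=> //; move=> x sx; apply: subspace_val_inj.
by rewrite g_val (f_affine (exist _ x sx)).
Qed.

Lemma at_most_two_points_homogeneous (P : R -> Prop) :
  (forall a b x, P a -> P b -> P x -> a <> b -> x = a \/ x = b) ->
  homogeneous (subspace Rline P).
Proof.
move=> P2 s f f_iso.
have [[x [sx fx]]|f_id] := classic (exists x, List.In x s /\ f x <> x); last first.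
  exists id; split; [by move=> y; exists y | split=> // z sz].
  by apply: NNPP => fz; apply: f_id; exists z; split=> // /esym.
set a := proj1_sig x; set b := proj1_sig (f x).
have ab : a <> b by move=> E; apply: fx; apply: subspace_val_inj.
have P_ab y : P y -> y = a \/ y = b.
  by move=> Py; apply: P2 (proj2_sig x) (proj2_sig (f x)) Py ab.
have P_swap y : P y -> P (-1 * y + (a + b)).
  case/P_ab=> ->; [have -> : -1 * a + (a + b) = b by ring | have -> : -1 * b + (a + b) = a by ring];
  exact: proj2_sig.
have P_swap' y : P y -> P (-1 * y - -1 * (a + b)).
  have -> : -1 * y - -1 * (a + b) = -1 * y + (a + b) by ring.
  exact: P_swap.
have [g [g_onto g_iso g_val]] :=
  subspace_affine_isometry (or_intror (-1 = 1) erefl) P_swap P_swap'.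
exists g; do 2!split=> //; move=> z sz; apply: subspace_val_inj; rewrite g_val.
case: (P_ab _ (proj2_sig z)) => za.
- have -> : z = x by apply: subspace_val_inj.
  rewrite /a /b; ring.
- rewrite za; case: (P_ab _ (proj2_sig (f z))) => fza; first by rewrite fza; ring.
  have := f_iso z x sz sx; rewrite /= za fza -/a -/b Rminus_diag Rabs_R0.
  by move/esym/Rline_eq0/esym/ab.
Qed.

Definition img n (e : 'I_n -> R) (x : R) := exists i, e i = x.

Lemma ord_le2_cases n (i j l : 'I_n) : (n <= 2)%N -> i <> j -> l = i \/ l = j.
Proof.
move=> n2 ij; have [->|li] := eqVneq l i; first by left.
have [->|lj] := eqVneq l j; first by right.
exfalso; have ij' : i != j by apply/eqP.
move: li lj ij' (ltn_ord i) (ltn_ord j) (ltn_ord l); rewrite -!val_eqE /=; lia.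
Qed.

Lemma img_at_most_two_points n (e : 'I_n -> R) : (n <= 2)%N ->
  forall a b x, img e a -> img e b -> img e x -> a <> b -> x = a \/ x = b.
Proof.
move=> n2 a b x [i <-] [j <-] [l <-] eij.
have ij : i <> j by move=> E; apply: eij; rewrite E.
by case: (ord_le2_cases l n2 ij) => ->; [left | right].
Qed.

(** * Realizations in the real line *)

Definition realizes (A : FMS) (e : 'I_(fms_card A) -> R) :=
  forall i j, Rabs (e i - e j) = fms_d A i j.
Arguments realizes : clear implicits.

Lemma realizes_inj A e : realizes A e -> injective e.
Proof. exact: (@isometry_inj Rline). Qed.

Lemma realizes_affine A e s c :
  s = 1 \/ s = -1 -> realizes A e -> realizes A (fun i => s * e i + c).
Proof. by move=> s1 He i j; rewrite Rabs_affine_pm1. Qed.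

Lemma realizes_embedding A B e h (g : 'I_(fms_card A) -> 'I_(fms_card B))
    (i0 : 'I_(fms_card A)) :
  realizes A e -> realizes B h -> fms_embedding A B g ->
  exists s c, (s = 1 \/ s = -1) /\ forall i, e i = s * h (g i) + c.
Proof.
move=> He Hh Hg; apply: (Rline_isometry_affine i0) => i j.
by rewrite He Hh Hg.
Qed.

Lemma age_Rline_subspace (P : R -> Prop) A :
  age (subspace Rline P) A <-> exists2 u, (forall i, P (u i)) & realizes A u.
Proof.
split=> [[e He]|[u Pu Hu]].
  by exists (fun i => proj1_sig (e i)) => [i|i j]; [exact: proj2_sig | rewrite -He].
by exists (fun i => exist P (u i) (Pu i)).
Qed.

Definition three_points (S : R -> Prop) :=
  exists a b c, [/\ S a, S b, S c & [/\ a <> b, b <> c & a <> c]].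

Lemma three_points_sub (S S' : R -> Prop) :
  (forall x, S x -> S' x) -> three_points S -> three_points S'.
Proof. by move=> SS' [a [b [c [Sa Sb Sc abc]]]]; exists a, b, c; split; auto. Qed.

Lemma three_points_img n (e : 'I_n -> R) :
  injective e -> (2 < n)%N -> three_points (img e).
Proof.
case: n e => [|[|[|n]]] // e e_inj _.
exists (e ord0), (e (inord 1)), (e (inord 2)); split; try by eexists.
by split=> /e_inj/(congr1 val); rewrite /= ?inordK.
Qed.

Lemma three_points_avoid S p q : three_points S -> exists r, [/\ S r, r <> p & r <> q].
Proof.
case=> a [b [c [Sa Sb Sc [ab bc ac]]]].
have [ap|ap] := Req_dec a p; have [aq|aq] := Req_dec a q;
have [bp|bp] := Req_dec b p; have [bq|bq] := Req_dec b q;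
  first [by exists a | by exists b | exists c; split=> // E; subst; congruence].
Qed.

Definition ord_pair (T : Type) (x y : T) (i : 'I_2) : T := if val i == 0%N then x else y.

Lemma ord_pair_inj (T : Type) (x y : T) : x <> y -> injective (ord_pair x y).
Proof.
move=> xy [[|[|//]] ?] [[|[|//]] ?]; rewrite /ord_pair /= => E;
  by [apply: val_inj | case: xy].
Qed.

(** * Sets of reals realized in an ideal *)

Section RealizableSets.
Variable C : fms_class.
Hypothesis C_ideal : is_ideal C.
Hypothesis C_line : subclass C (age Rline).

Let C_down : forall A B, C B -> fms_embeds A B -> C A := proj1 (proj2 C_ideal).
Let C_directed : forall A B, C A -> C B ->
  exists E, C E /\ fms_embeds A E /\ fms_embeds B E := proj2 (proj2 C_ideal).

Lemma member_realization A : C A -> exists e, realizes A e.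
Proof. exact: C_line. Qed.

Definition realizable (S : R -> Prop) :=
  exists A e, [/\ C A, realizes A e & forall x, S x -> img e x].

Lemma realizable_sub (S S' : R -> Prop) :
  (forall x, S' x -> S x) -> realizable S -> realizable S'.
Proof. by move=> S'S [A [e [CA He Se]]]; exists A, e; split=> // x /S'S/Se. Qed.

Lemma realizable_affine_preimage S s c : s = 1 \/ s = -1 ->
  realizable S -> realizable (fun x => S (s * x + c)).
Proof.
move=> s1 [A [e [CA He Se]]]; exists A, (fun i => s * e i + - (s * c)); split=> //.
  exact: realizes_affine.
move=> x /Se[i ei]; exists i; rewrite ei.
by case: s1 => ->; ring.
Qed.

Lemma realizable_member S A u :
  realizable S -> (forall i, S (u i)) -> realizes A u -> C A.
Proof.
case=> B [h [CB Hh Sh]] Su Hu.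
have [m Hm] := fin_all_exists (fun i => Sh _ (Su i)).
by apply: (C_down CB); exists m => i j; rewrite -Hh -Hu !Hm.
Qed.

Lemma members_card_le2 :
  ~ (exists A, C A /\ fms_card A = 3%N) -> forall A, C A -> (fms_card A <= 2)%N.
Proof.
move=> noC3 A CA; rewrite leqNgt; apply/negP => A3; apply: noC3.
have w_inj : injective (widen_ord A3) by move=> i j /(congr1 val) /= /val_inj.
by exists (@induced_fms (fms_space A) 3 _ w_inj); split=> //; apply: ideal_restrict.
Qed.

Lemma exists_largest_member k : (forall A, C A -> (fms_card A <= k)%N) ->
  exists M, C M /\ forall A, C A -> (fms_card A <= fms_card M)%N.
Proof.
elim: k => [|k IH] Ck.
  have [M CM] := proj1 C_ideal.
  by exists M; split=> // A /Ck; rewrite leqn0 => /eqP ->.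
have [[M [CM Mk]]|noM] := classic (exists M, C M /\ fms_card M = k.+1).
  by exists M; split=> // A /Ck; rewrite Mk.
apply: IH => A CA; rewrite -ltnS ltn_neqAle Ck // andbT.
by apply/eqP => Ak; apply: noM; exists A.
Qed.

Lemma largest_member_age M e : C M -> realizes M e ->
  (forall A, C A -> (fms_card A <= fms_card M)%N) ->
  same_class (age (subspace Rline (img e))) C.
Proof.
move=> CM He M_max A; rewrite age_Rline_subspace; split=> [[u eu Hu]|CA].
  by apply: (realizable_member (S := img e) _ eu Hu); exists M, e.
have [E [CE [[f Hf] [g Hg]]]] := C_directed CA CM.
have card_EM : (#|'I_(fms_card E)| <= #|'I_(fms_card M)|)%N.
  by rewrite !card_ord; apply: M_max.
have g_onto := inj_card_onto (embedding_inj Hg) card_EM.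
have [m Hm] := fin_all_exists (fun i => codomP (g_onto (f i))).
exists (fun i => e (m i)) => [i|i j]; first by exists (m i).
by rewrite He -Hg -!Hm Hf.
Qed.

Definition signed_distances (x : R) := exists A i j, C A /\ Rabs x = fms_d A i j.

Lemma realizable_signed_distance S a b :
  realizable S -> S a -> S b -> signed_distances (b - a).
Proof. by case=> A [e [CA He Se]] /Se[i <-] /Se[j <-]; exists A, j, i. Qed.

Lemma common_upper_bound T (ds : list R) : C T ->
  (forall d, List.In d ds -> signed_distances d) ->
  exists E, [/\ C E, fms_embeds T E &
    forall d, List.In d ds -> exists i j, Rabs d = fms_d E i j].
Proof.
move=> CT; elim: ds => [|d ds IH] Hds.
  by exists T; split=> //; exists id.
have [E1 [CE1 TE1 dsE1]] := IH (fun d' d'ds => Hds d' (or_intror d'ds)).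
have [A [a [b [CA dA]]]] := Hds d (or_introl erefl).
have [E [CE [[f Hf] [g Hg]]]] := C_directed CE1 CA.
exists E; split=> //; first exact: fms_embeds_trans TE1 (ex_intro _ f Hf).
move=> d' [<-|/dsE1[i [j ->]]]; first by exists (g a), (g b); rewrite Hg.
by exists (f i), (f j); rewrite Hf.
Qed.

Lemma realizable_with_differences T (ds : list R) : C T -> (2 < fms_card T)%N ->
  (forall d, List.In d ds -> signed_distances d) ->
  exists S, [/\ realizable S, three_points S &
    forall d, List.In d ds -> exists p q, [/\ S p, S q & d = q - p]].
Proof.
move=> CT T3 Hds.
have [E [CE [f Hf] dsE]] := common_upper_bound CT Hds.
have [h Hh] := member_realization CE.
exists (img h); split.
- by exists E, h.
- apply: three_points_sub (three_points_img (e := h \o f) _ T3).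
    by move=> x [i <-]; exists (f i).
  exact: inj_comp (realizes_inj Hh) (embedding_inj Hf).
- move=> d /dsE[i [j]]; rewrite -Hh => /Rabs_eq_Rabs[->|->].
    by exists (h j), (h i); split; [exists j | exists i |].
  by exists (h i), (h j); split; [exists i | exists j | ring].
Qed.

Hypothesis C_amalg : two_amalgamation C.

(* By rigidity, both realizations are the same affine image of a realization of
   the amalgam. *)
Lemma realizable_glue S1 S2 a b : a <> b -> S1 a -> S1 b -> S2 a -> S2 b ->
  realizable S1 -> realizable S2 -> realizable (fun x => S1 x \/ S2 x).
Proof.
move=> ab S1a S1b S2a S2b [A1 [e1 [CA1 He1 S1e]]] [A2 [e2 [CA2 He2 S2e]]].
have [[p e1p] [q e1q]] := (S1e a S1a, S1e b S1b).
have [[p' e2p] [q' e2q]] := (S2e a S2a, S2e b S2b).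
have pq : p <> q by move=> E; apply: ab; rewrite -e1p -e1q E.
pose f1 := ord_pair p q; pose f2 := ord_pair p' q'.
have e21 i : e2 (f2 i) = e1 (f1 i) by rewrite /f1 /f2 /ord_pair; case: ifP => _; congruence.
pose A := @induced_fms (fms_space A1) 2 f1 (ord_pair_inj pq).
have Hf1 : fms_embedding A A1 f1 by [].
have Hf2 : fms_embedding A A2 f2 by move=> i j; rewrite -He2 !e21 He1.
have [B [g1 [g2 [CB [Hg1 [Hg2 g12]]]]]] :=
  C_amalg (ideal_restrict (ord_pair_inj pq) C_ideal CA1) CA1 CA2 (leqnn 2) Hf1 Hf2.
have [h0 Hh0] := member_realization CB.
have [s1 [c1 [s1_pm e1_h]]] := realizes_embedding p He1 Hh0 Hg1.
have [s2 [c2 [_ e2_h]]] := realizes_embedding p' He2 Hh0 Hg2.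
have [s12 c12] : s1 = s2 /\ c1 = c2.
  apply: (@affine_eq_at_two_points _ _ _ _ (h0 (g1 p)) (h0 (g1 q))).
  - by move=> E; apply/pq/(realizes_inj He1); rewrite !e1_h E.
  - by rewrite -e1_h e1p -e2p e2_h (g12 ord0).
  - by rewrite -e1_h e1q -e2q e2_h (g12 ord_max).
subst s2 c2; exists B, (fun j => s1 * h0 j + c1); split=> //; first exact: realizes_affine.
by move=> x [/S1e|/S2e] [i <-]; [exists (g1 i); rewrite e1_h | exists (g2 i); rewrite e2_h].
Qed.

Lemma realizable_reflect_union S a b : a <> b -> S a -> S b -> realizable S ->
  realizable (fun x => S x \/ S (a + b - x)).
Proof.
move=> ab Sa Sb rS.
have reflE x : -1 * x + (a + b) = a + b - x by ring.
have rS' := realizable_affine_preimage (a + b) (or_intror (-1 = 1) erefl) rS.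
have S'a : S (-1 * a + (a + b)) by rewrite reflE; have -> : a + b - a = b by ring.
have S'b : S (-1 * b + (a + b)) by rewrite reflE; have -> : a + b - b = a by ring.
apply: realizable_sub (realizable_glue ab Sa Sb S'a S'b rS rS') => x [Sx|Sx].
  by left.
by right; rewrite reflE.
Qed.

(* The reflections through the midpoints of p, r and of q, r compose to the
   translation by q - p. *)
Lemma realizable_add_difference S p q z : three_points S -> S p -> S q -> S z ->
  realizable S -> realizable (fun x => S x \/ x = z + q - p).
Proof.
move=> S3 Sp Sq Sz rS.
have [r [Sr rp rq]] := three_points_avoid p q S3.
pose S1 x := S x \/ S (p + r - x).
have rS1 : realizable S1 := realizable_reflect_union (nesym rp) Sp Sr rS.
have rS2 := realizable_reflect_union (S := S1) (nesym rq) (or_introl Sq) (or_introl Sr) rS1.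
apply: realizable_sub rS2 => x [Sx|->]; first by left; left.
by right; right; have -> : p + r - (q + r - (z + q - p)) = z by ring.
Qed.

Lemma realizable_add_differences S z (ds : list R) :
  three_points S -> S z -> realizable S ->
  (forall d, List.In d ds -> exists p q, [/\ S p, S q & d = q - p]) ->
  realizable (fun x => S x \/ exists2 d, List.In d ds & x = d + z).
Proof.
move=> S3 Sz rS; elim: ds => [|d ds IH] Hds.
  by apply: realizable_sub rS => x [//|[]].
have [p [q [Sp Sq ->]]] := Hds d (or_introl erefl).
set S' := fun x => S x \/ _ in IH.
have rS' : realizable S' := IH (fun d' d'ds => Hds d' (or_intror d'ds)).
have SS' x : S x -> S' x := @or_introl _ _.
have := realizable_add_difference (three_points_sub SS' S3) (SS' _ Sp) (SS' _ Sq) (SS' _ Sz) rS'.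
apply: realizable_sub => x [Sx|[d' [<-|d'ds] ->]].
- by left; left.
- by right; ring.
- by left; right; exists d'.
Qed.

Variable T : FMS.
Hypotheses (CT : C T) (T3 : (2 < fms_card T)%N).

Lemma signed_distances_member A u :
  (forall i, signed_distances (u i)) -> realizes A u -> C A.
Proof.
move=> Gu Hu; pose ds := List.map u (enum 'I_(fms_card A)).
have Gds d : List.In d ds -> signed_distances d by case/List.in_map_iff=> i [<- _].
have [S [rS S3 Sds]] := realizable_with_differences CT T3 Gds.
have [z [_ [_ [Sz _ _ _]]]] := S3.
have rS' := realizable_add_differences S3 Sz rS Sds.
apply: (realizable_member (realizable_affine_preimage z (or_introl (1 = -1) erefl) rS') _ Hu).
by move=> i; right; exists (u i); [exact: List.in_map (In_enum i) | ring].
Qed.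

Lemma signed_distances_add x y :
  signed_distances x -> signed_distances y -> signed_distances (x + y).
Proof.
move=> Gx Gy.
have Gxy d : List.In d [:: x; y] -> signed_distances d by case=> [<-|[<-|[]]].
have [S [rS S3 Sds]] := realizable_with_differences CT T3 Gxy.
have [p [q [Sp Sq ->]]] := Sds x (or_introl erefl).
have [p' [q' [Sp' Sq' ->]]] := Sds y (or_intror (or_introl erefl)).
have := realizable_signed_distance (realizable_add_difference S3 Sp' Sq' Sq rS)
  (or_introl Sp) (or_intror erefl).
by have -> : q + q' - p' - p = q - p + (q' - p') by ring.
Qed.

Lemma signed_distances_subgroup : add_subgroup signed_distances.
Proof.
split; [|split; first exact: signed_distances_add].
  pose i0 : 'I_(fms_card T) := Ordinal (leq_ltn_trans (leq0n 2) T3).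
  by exists T, i0, i0; split=> //; rewrite Rabs_R0; symmetry; apply/fms_d_eq0.
by move=> x [A [i [j [CA dx]]]]; exists A, i, j; rewrite Rabs_Ropp.
Qed.

Lemma age_signed_distances : same_class (age (subspace Rline signed_distances)) C.
Proof.
move=> A; rewrite age_Rline_subspace; split=> [[u Gu Hu]|CA].
  exact: signed_distances_member Gu Hu.
have [e He] := member_realization CA.
case: (pickP (@predT 'I_(fms_card A))) => [i0 _|A0]; last by exists e => // i; have := A0 i.
by exists (fun i => e i - e i0) => [i|i j]; [exists A, i, i0 | rewrite -He; congr Rabs; ring].
Qed.

End RealizableSets.

Local Close Scope R_scope.

Theorem lemma4 (C : fms_class) :
  is_ideal C -> subclass C (age Rline) ->
  (two_amalgamation C <->
     exists D : MetricSpace, homogeneous D /\ same_class (age D) C) /\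
  ((exists A : FMS, C A /\ fms_card A = 3) -> two_amalgamation C ->
     exists G : R -> Prop, add_subgroup G /\
       homogeneous (subspace Rline G) /\ same_class (age (subspace Rline G)) C).
Proof.
move=> C_ideal C_line.
have subgroup_case : (exists A : FMS, C A /\ fms_card A = 3) -> two_amalgamation C ->
    exists G : R -> Prop, add_subgroup G /\
      homogeneous (subspace Rline G) /\ same_class (age (subspace Rline G)) C.
  move=> [T [CT T3]] C_amalg; have T_gt2 : 2 < fms_card T by rewrite T3.
  have G_grp := signed_distances_subgroup C_ideal C_line C_amalg CT T_gt2.
  exists (signed_distances C); split=> //; split; first exact: subgroup_homogeneous.
  exact (age_signed_distances C_ideal C_line C_amalg CT T_gt2).
split=> //; split=> [C_amalg|[D [D_hom ageD]]]; last first.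
  exact: homogeneous_two_amalgamation D_hom ageD.
have [C3|noC3] := classic (exists A : FMS, C A /\ fms_card A = 3).
  have [G [_ [G_hom ageG]]] := subgroup_case C3 C_amalg.
  by exists (subspace Rline G).
have C_le2 := members_card_le2 C_ideal noC3.
have [M [CM M_max]] := exists_largest_member C_ideal C_le2.
have [e He] := member_realization C_line CM.
exists (subspace Rline (img e)); split.
  exact/at_most_two_points_homogeneous/img_at_most_two_points/C_le2.
exact (largest_member_age C_ideal CM He M_max).
Qed.
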